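(* Let $\theta>1$ be real and $n$ a positive integer. Then either $M'_\theta(n)=\lfloor n/\log\theta-1/2\rfloor$ or $M'_\theta(n)=\lfloor n/\log\theta+1/2\rfloor$. Moreover, $M'_\theta(n)=\lfloor n/\log\theta+1/2\rfloor$ if and only if \[\frac12-f\!\left(\frac{\log\theta}{n}\right)\leq \left\{\frac{n}{\log\theta}\right\}<\frac12.\]
   Context: $\lfloor x\rfloor$ is the floor and $\{x\}=x-\lfloor x\rfloor$ the fractional part; $\log$ is the natural logarithm. $M'_\theta(n)=\left\lfloor 1/(\theta^{1/n}-1)\right\rfloor$. For $t>0$, $f(t)=\frac{1}{e^t-1}-\frac1t+\frac12$. *)

From Stdlib Require Import Reals ZArith.
Open Scope R_scope.

Definition Rfloor (x : R) : Z := Int_part x.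
Definition fracp (x : R) : R := x - IZR (Rfloor x).

Definition Mprime (theta : R) (n : nat) : Z :=
  Rfloor (1 / (Rpower theta (1 / INR n) - 1)).

Definition fT (t : R) : R := 1 / (exp t - 1) - 1 / t + 1 / 2.

(* Writing t = ln(theta)/n, one has theta^(1/n) = e^t and 1/(e^t - 1) = n/ln(theta) - 1/2 + f(t),
   with 0 < f(t) < 1/2.  So M'_theta(n) is the floor of a point strictly between x - 1/2 and
   x + 1/2 (x = n/ln theta), and which of the two floors it equals is read off from where {x}
   lies relative to 1/2 - f(t) and 1/2. *)
From Stdlib Require Import Reals ZArith Lra Lia.
From Coquelicot Require Import Coquelicot.
Open Scope R_scope.

Lemma Rfloor_spec (y : R) : IZR (Rfloor y) <= y < IZR (Rfloor y) + 1.
Proof. unfold Rfloor. destruct (base_Int_part y). lra. Qed.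

Lemma Rfloor_eq (y : R) (z : Z) : IZR z <= y -> y < IZR z + 1 -> Rfloor y = z.
Proof.
  intros Hzy Hyz. unfold Rfloor, Int_part.
  assert (Hup : (z + 1 = up y)%Z) by (apply tech_up; rewrite plus_IZR; lra).
  lia.
Qed.

Section HalfShift.

Variables x f : R.
Hypothesis f_gt0 : 0 < f.
Hypothesis f_lt_half : f < 1 / 2.

Let k := Rfloor x.

Lemma Rfloor_half_shift_low :
  fracp x < 1 / 2 - f ->
  Rfloor (x - 1 / 2 + f) = Rfloor (x - 1 / 2) /\
  Rfloor (x - 1 / 2 + f) <> Rfloor (x + 1 / 2).
Proof.
  unfold fracp; fold k; intros Hfr; pose proof (Rfloor_spec x) as Hk; fold k in Hk.
  rewrite (Rfloor_eq (x - 1 / 2 + f) (k - 1)) by (rewrite minus_IZR; lra).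
  rewrite (Rfloor_eq (x - 1 / 2) (k - 1)) by (rewrite minus_IZR; lra).
  rewrite (Rfloor_eq (x + 1 / 2) k) by lra.
  split; [reflexivity | lia].
Qed.

Lemma Rfloor_half_shift_mid :
  1 / 2 - f <= fracp x < 1 / 2 ->
  Rfloor (x - 1 / 2 + f) = Rfloor (x + 1 / 2).
Proof.
  unfold fracp; fold k; intros Hfr; pose proof (Rfloor_spec x) as Hk; fold k in Hk.
  rewrite (Rfloor_eq (x - 1 / 2 + f) k) by lra.
  rewrite (Rfloor_eq (x + 1 / 2) k) by lra.
  reflexivity.
Qed.

Lemma Rfloor_half_shift_high :
  1 / 2 <= fracp x ->
  Rfloor (x - 1 / 2 + f) = Rfloor (x - 1 / 2) /\
  Rfloor (x - 1 / 2 + f) <> Rfloor (x + 1 / 2).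
Proof.
  unfold fracp; fold k; intros Hfr; pose proof (Rfloor_spec x) as Hk; fold k in Hk.
  rewrite (Rfloor_eq (x - 1 / 2 + f) k) by lra.
  rewrite (Rfloor_eq (x - 1 / 2) k) by lra.
  rewrite (Rfloor_eq (x + 1 / 2) (k + 1)) by (rewrite plus_IZR; lra).
  split; [reflexivity | lia].
Qed.

Lemma Rfloor_half_shift :
  (Rfloor (x - 1 / 2 + f) = Rfloor (x - 1 / 2) \/
   Rfloor (x - 1 / 2 + f) = Rfloor (x + 1 / 2)) /\
  (Rfloor (x - 1 / 2 + f) = Rfloor (x + 1 / 2) <->
   1 / 2 - f <= fracp x /\ fracp x < 1 / 2).
Proof.
  destruct (Rlt_le_dec (fracp x) (1 / 2 - f)) as [Hlow | Hge].
  { destruct Rfloor_half_shift_low as [Heq Hne]; [exact Hlow |].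
    split; [now left | split; [tauto | lra]]. }
  destruct (Rlt_le_dec (fracp x) (1 / 2)) as [Hmid | Hhigh].
  { pose proof (Rfloor_half_shift_mid (conj Hge Hmid)) as Heq.
    split; [now right | tauto]. }
  destruct Rfloor_half_shift_high as [Heq Hne]; [exact Hhigh |].
  split; [now left | split; [tauto | lra]].
Qed.

End HalfShift.

(* h(t) = (t - 2) e^t + t + 2 vanishes at 0 and h'(t) = e^t (t - 1 + e^-t) > 0. *)
Lemma sub_two_mul_exp_add_two_pos (t : R) : 0 < t -> 0 < (t - 2) * exp t + t + 2.
Proof.
  intros Ht.
  destruct (MVT_cor2 (fun s => (s - 2) * exp s + s + 2)
              (fun s => (s - 1) * exp s + 1) 0 t Ht) as [c [Hmvt Hc]].
  { intros c _. apply is_derive_Reals. auto_derive; auto. ring. }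
  rewrite exp_0 in Hmvt.
  assert (Hderiv : 0 < (c - 1) * exp c + 1).
  { assert (Hexp : 1 - c < exp (- c)) by (apply exp_ineq1; lra).
    rewrite exp_Ropp in Hexp.
    pose proof (exp_pos c) as Hec.
    assert (Hmul : (1 - c) * exp c < / exp c * exp c)
      by (apply Rmult_lt_compat_r; lra).
    rewrite Rinv_l in Hmul by lra. lra. }
  assert (0 < ((c - 1) * exp c + 1) * (t - 0)) by (apply Rmult_lt_0_compat; lra).
  lra.
Qed.

Lemma fT_pos (t : R) : 0 < t -> 0 < fT t.
Proof.
  intros Ht. unfold fT.
  assert (Hexp : 1 + t < exp t) by (apply exp_ineq1; lra).
  pose proof (sub_two_mul_exp_add_two_pos t Ht).
  replace (1 / (exp t - 1) - 1 / t + 1 / 2)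
    with (((t - 2) * exp t + t + 2) / (2 * t * (exp t - 1))) by (field; lra).
  apply Rdiv_lt_0_compat; [lra |]. apply Rmult_lt_0_compat; lra.
Qed.

Lemma fT_lt_half (t : R) : 0 < t -> fT t < 1 / 2.
Proof.
  intros Ht. unfold fT.
  assert (Hexp : 1 + t < exp t) by (apply exp_ineq1; lra).
  apply Rminus_gt_0_lt.
  replace (1 / 2 - (1 / (exp t - 1) - 1 / t + 1 / 2))
    with ((exp t - 1 - t) / (t * (exp t - 1))) by (field; lra).
  apply Rdiv_lt_0_compat; [lra |]. apply Rmult_lt_0_compat; lra.
Qed.

Lemma Mprime_eq_Rfloor_fT (theta : R) (n : nat) : 1 < theta -> (0 < n)%nat ->
  Mprime theta n = Rfloor (INR n / ln theta - 1 / 2 + fT (ln theta / INR n)).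
Proof.
  intros Htheta Hn.
  assert (HL : 0 < ln theta) by (rewrite <- ln_1; apply ln_increasing; lra).
  assert (HN : 0 < INR n) by (apply lt_0_INR; lia).
  unfold Mprime, Rpower, fT. f_equal.
  replace (1 / INR n * ln theta) with (ln theta / INR n) by (field; lra).
  replace (1 / (ln theta / INR n)) with (INR n / ln theta) by (field; lra).
  ring.
Qed.

Theorem mainTheorem9 (theta : R) (n : nat) (Htheta : 1 < theta) (Hn : (0 < n)%nat) :
  (Mprime theta n = Rfloor (INR n / ln theta - 1 / 2) \/
   Mprime theta n = Rfloor (INR n / ln theta + 1 / 2)) /\
  (Mprime theta n = Rfloor (INR n / ln theta + 1 / 2) <->
   (1 / 2 - fT (ln theta / INR n) <= fracp (INR n / ln theta) /\
    fracp (INR n / ln theta) < 1 / 2)).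
Proof.
  assert (Ht : 0 < ln theta / INR n).
  { apply Rdiv_lt_0_compat.
    - rewrite <- ln_1; apply ln_increasing; lra.
    - apply lt_0_INR; lia. }
  rewrite (Mprime_eq_Rfloor_fT theta n Htheta Hn).
  exact (Rfloor_half_shift _ _ (fT_pos _ Ht) (fT_lt_half _ Ht)).
Qed.
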